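(* Let $\epsilon>0$ be sufficiently small. Consider 4 players where players 3 and 4 have the uniform (Lebesgue) valuation on $[0,1]$; player 1 has a nonatomic valuation giving value $\frac12-\epsilon$ to $(0,\epsilon)$, $3\epsilon$ to $(\frac34,\frac34+3\epsilon)$, $\frac12-2\epsilon$ to $(1-\epsilon,1)$, and $0$ elsewhere; player 2 has a nonatomic valuation giving value $3\epsilon$ to $(\epsilon,2\epsilon)$, $\frac12-2\epsilon$ to $(\frac14-\epsilon,\frac14)$, $\frac12-\epsilon$ to $(\frac12,\frac12+\epsilon)$, and $0$ elsewhere. Then every envy-free complete connected division has egalitarian welfare at most $\frac14+2\epsilon$, while the partial division giving $(0,2\epsilon)$ to player 1, $(2\epsilon,\frac12)$ to player 3, $(\frac12,\frac12+\epsilon)$ to player 2, $(\frac12+\epsilon,1-\epsilon)$ to player 4 (discarding $(1-\epsilon,1)$) is envy-free with every player receiving utility at least $\frac12-2\epsilon$. Hence this instance exhibits an egalitarian $\alpha$-dumping paradox with $\alpha=\frac{2-8\epsilon}{1+8\epsilon}$.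
   Context: A (connected) division for players $1,\dots,n$ of the cake $[0,1]$ is a sequence $(X_1,\dots,X_n)$ of pairwise disjoint open intervals (possibly empty), $X_i$ being player $i$'s piece; it is complete if the union of the closures of the $X_i$ equals $[0,1]$, and partial otherwise. Each player $i$ has a valuation $v_i$, a nonatomic probability measure on $[0,1]$; $u_i(x,j)=v_i(X_j)$. A division is envy-free if $u_i(x,i)\ge u_i(x,j)$ for all $i,j$. Egalitarian welfare: $eg(x)=\min_i u_i(x,i)$. For $\alpha>1$, an instance exhibits an egalitarian $\alpha$-dumping paradox if there is an envy-free partial division $y$ with $eg(y)\ge\alpha\,eg(x)$ for every envy-free complete division $x$. *)

From Stdlib Require Import Reals Lra.
Open Scope R_scope.

(* A nonatomic probability measure v on [0,1] is represented, as far as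
   its values on intervals are concerned (the only values ever used, since
   pieces are intervals), by its distribution function F:
   v((a,b)) = F b - F a.  Nonatomic <-> F continuous. *)
Definition valuation (F : R -> R) : Prop :=
  (forall x y, x <= y -> F x <= F y) /\
  (forall x, continuity_pt F x) /\
  F 0 = 0 /\ F 1 = 1.

(* Players are indexed 0..n-1 (player k of the paper is index k-1).
   Player i's piece is the open interval (a i, b i), with a i <= b i;
   it is empty iff a i = b i. *)
Definition is_division (n : nat) (a b : nat -> R) : Prop :=
  (forall i, (i < n)%nat -> 0 <= a i /\ a i <= b i /\ b i <= 1) /\
  (forall i j, (i < n)%nat -> (j < n)%nat -> i <> j ->
     a i = b i \/ a j = b j \/ b i <= a j \/ b j <= a i).

Definition complete (n : nat) (a b : nat -> R) : Prop :=
  forall x, 0 <= x <= 1 ->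
    exists i, (i < n)%nat /\ a i < b i /\ a i <= x <= b i.

Definition util (F : nat -> R -> R) (a b : nat -> R) (i j : nat) : R :=
  F i (b j) - F i (a j).

Definition envy_free (n : nat) (F : nat -> R -> R) (a b : nat -> R) : Prop :=
  forall i j, (i < n)%nat -> (j < n)%nat -> util F a b i j <= util F a b i i.

Fixpoint minupto (f : nat -> R) (m : nat) : R :=
  match m with
  | O => f O
  | S k => Rmin (f (S k)) (minupto f k)
  end.

(* egalitarian welfare min_{i<n} u_i(x,i) (for n >= 1) *)
Definition eg (n : nat) (F : nat -> R -> R) (a b : nat -> R) : R :=
  minupto (fun i => util F a b i i) (n - 1).

Definition eg_dumping_paradox (n : nat) (F : nat -> R -> R) (alpha : R) : Prop :=
  1 < alpha /\
  exists a b, is_division n a b /\ ~ complete n a b /\ envy_free n F a b /\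
    forall a' b', is_division n a' b' -> complete n a' b' -> envy_free n F a' b' ->
      eg n F a b >= alpha * eg n F a' b'.

Definition unif (x : R) : R := x.

Definition vals4 (F1 F2 : R -> R) : nat -> R -> R :=
  fun i => match i with O => F1 | 1%nat => F2 | _ => unif end.

Definition ya (eps : R) : nat -> R :=
  fun i => match i with O => 0 | 1%nat => 1/2 | 2%nat => 2*eps | _ => 1/2 + eps end.
Definition yb (eps : R) : nat -> R :=
  fun i => match i with O => 2*eps | 1%nat => 1/2 + eps | 2%nat => 1/2 | _ => 1 - eps end.

(* Suppose a complete envy-free division gives every player more than 1/4 + 2 eps
   (players are indexed from 0 as in the definitions).  Piece 0 cannot stay left of
   3/4, for then the piece reaching 1 is envied by player 0 or worth too little to
   its owner; the long uniform pieces force it to start after eps, and its value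
   then forces it to end after 1 - eps.  Whoever holds the piece starting at 0 is
   then either shortchanged or envied. *)

From Stdlib Require Import Reals Lra Lia.
Open Scope R_scope.

Lemma minupto_le (f : nat -> R) m i : (i <= m)%nat -> minupto f m <= f i.
Proof.
  induction m as [|m IH]; intros Hi; simpl.
  - replace i with 0%nat by lia. lra.
  - destruct (Nat.eq_dec i (S m)) as [->|Hne].
    + apply Rmin_l.
    + eapply Rle_trans; [apply Rmin_r | apply IH; lia].
Qed.

Lemma minupto_glb (f : nat -> R) m c :
  (forall i, (i <= m)%nat -> c <= f i) -> c <= minupto f m.
Proof.
  induction m as [|m IH]; intros H; simpl.
  - apply H; lia.
  - apply Rmin_glb; [apply H; lia | apply IH; intros; apply H; lia].
Qed.

Lemma eg_le_util n F a b i : (i < n)%nat -> eg n F a b <= util F a b i i.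
Proof. intros Hi. apply (minupto_le (fun i => util F a b i i)); lia. Qed.

Lemma eg_glb n F a b c : (0 < n)%nat ->
  (forall i, (i < n)%nat -> c <= util F a b i i) -> c <= eg n F a b.
Proof. intros Hn H. apply minupto_glb. intros i Hi. apply H; lia. Qed.

Lemma util_pos_nonempty n F a b k i : is_division n a b -> (i < n)%nat ->
  0 < util F a b k i -> a i < b i.
Proof.
  intros [Hb _] Hi Hu. destruct (Hb i Hi) as [_ [Hab _]].
  destruct (Rle_lt_or_eq_dec _ _ Hab) as [Hlt|Heq]; [exact Hlt|].
  unfold util in Hu. rewrite Heq in Hu. lra.
Qed.

Lemma division_nonempty_ordered n a b i j : is_division n a b ->
  (i < n)%nat -> (j < n)%nat -> i <> j -> a i < b i -> a j < b j ->
  b i <= a j \/ b j <= a i.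
Proof. intros [_ Hd] Hi Hj Hij Hni Hnj. destruct (Hd i j Hi Hj Hij) as [h|[h|h]]; lra. Qed.

Lemma complete_left_end n a b : is_division n a b -> complete n a b ->
  exists i, (i < n)%nat /\ a i < b i /\ a i = 0.
Proof.
  intros [Hb _] Hc. destruct (Hc 0) as [i [Hi [Hne Hx]]]; [lra|].
  exists i. destruct (Hb i Hi) as [? [? ?]]. split; [exact Hi | split; lra].
Qed.

Lemma complete_right_end n a b : is_division n a b -> complete n a b ->
  exists i, (i < n)%nat /\ a i < b i /\ b i = 1.
Proof.
  intros [Hb _] Hc. destruct (Hc 1) as [i [Hi [Hne Hx]]]; [lra|].
  exists i. destruct (Hb i Hi) as [? [? ?]]. split; [exact Hi | split; lra].
Qed.

(* The three given masses of each player sum to 1, so a monotone distribution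
   function with F 0 = 0 and F 1 = 1 is flat outside the three intervals. *)
Lemma player1_profile eps F1 : 0 <= eps <= 1/16 -> valuation F1 ->
  F1 eps - F1 0 = 1/2 - eps ->
  F1 (3/4 + 3*eps) - F1 (3/4) = 3*eps ->
  F1 1 - F1 (1 - eps) = 1/2 - 2*eps ->
  F1 eps = 1/2 - eps /\ F1 (3/4) = 1/2 - eps /\
  F1 (3/4 + 3*eps) = 1/2 + 2*eps /\ F1 (1 - eps) = 1/2 + 2*eps.
Proof.
  intros He [Hm [_ [H0 H1]]] h1 h2 h3.
  assert (F1 eps <= F1 (3/4)) by (apply Hm; lra).
  assert (F1 (3/4 + 3*eps) <= F1 (1 - eps)) by (apply Hm; lra).
  lra.
Qed.

Lemma player2_profile eps F2 : 0 <= eps <= 1/16 -> valuation F2 ->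
  F2 (2*eps) - F2 eps = 3*eps ->
  F2 (1/4) - F2 (1/4 - eps) = 1/2 - 2*eps ->
  F2 (1/2 + eps) - F2 (1/2) = 1/2 - eps ->
  F2 (2*eps) = 3*eps /\ F2 (1/4 - eps) = 3*eps /\
  F2 (1/4) = 1/2 + eps /\ F2 (1/2) = 1/2 + eps /\ F2 (1/2 + eps) = 1.
Proof.
  intros He [Hm [_ [H0 H1]]] h1 h2 h3.
  assert (F2 0 <= F2 eps) by (apply Hm; lra).
  assert (F2 (2*eps) <= F2 (1/4 - eps)) by (apply Hm; lra).
  assert (F2 (1/4) <= F2 (1/2)) by (apply Hm; lra).
  assert (F2 (1/2 + eps) <= F2 1) by (apply Hm; lra).
  lra.
Qed.

Section Instance.

Variable eps : R.
Variables F1 F2 : R -> R.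

Hypothesis eps_small : 0 < eps < 1/16.
Hypothesis F1_mono : forall x y, x <= y -> F1 x <= F1 y.
Hypothesis F2_mono : forall x y, x <= y -> F2 x <= F2 y.
Hypotheses (F1_0 : F1 0 = 0) (F1_1 : F1 1 = 1) (F2_0 : F2 0 = 0) (F2_1 : F2 1 = 1).
Hypotheses (F1_eps : F1 eps = 1/2 - eps) (F1_3q : F1 (3/4) = 1/2 - eps)
  (F1_3q3e : F1 (3/4 + 3*eps) = 1/2 + 2*eps) (F1_1e : F1 (1 - eps) = 1/2 + 2*eps).
Hypotheses (F2_2e : F2 (2*eps) = 3*eps)
  (F2_qe : F2 (1/4 - eps) = 3*eps) (F2_q : F2 (1/4) = 1/2 + eps)
  (F2_h : F2 (1/2) = 1/2 + eps) (F2_he : F2 (1/2 + eps) = 1).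

Local Notation V := (vals4 F1 F2).

Section HighWelfare.

Variables a b : nat -> R.
Hypothesis division : is_division 4 a b.
Hypothesis completeness : complete 4 a b.
Hypothesis envy_freeness : envy_free 4 V a b.
Hypothesis welfare_high : forall i, (i < 4)%nat -> 1/4 + 2*eps < util V a b i i.

Lemma high_welfare_nonempty i : (i < 4)%nat -> a i < b i.
Proof.
  intros Hi. apply (util_pos_nonempty 4 V a b i i division Hi).
  specialize (welfare_high i Hi). lra.
Qed.

Lemma high_welfare_ordered i j : (i < 4)%nat -> (j < 4)%nat -> i <> j ->
  b i <= a j \/ b j <= a i.
Proof.
  intros Hi Hj Hij. apply (division_nonempty_ordered 4); auto;
  apply high_welfare_nonempty; assumption.
Qed.

Lemma uniform_piece_long i : (2 <= i < 4)%nat -> 1/4 + 2*eps < b i - a i.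
Proof.
  intros Hi. specialize (welfare_high i ltac:(lia)). unfold util, vals4 in welfare_high.
  destruct i as [|[|i]]; [lia|lia|exact welfare_high].
Qed.

Lemma piece0_crosses_three_quarters : 3/4 < b 0%nat.
Proof.
  apply Rnot_le_lt; intro Hb0.
  destruct (proj1 division 0%nat ltac:(lia)) as [Ha0 _].
  assert (F1 (b 0%nat) <= F1 (3/4)) by (apply F1_mono; lra).
  assert (F1 0 <= F1 (a 0%nat)) by (apply F1_mono; lra).
  destruct (complete_right_end 4 a b division completeness) as [i [Hi [Hne Hbi]]].
  pose proof (envy_freeness 0%nat i ltac:(lia) Hi) as Henvy.
  pose proof (welfare_high i Hi) as Hwi.
  unfold util, vals4, unif in Henvy, Hwi. rewrite Hbi in Henvy, Hwi.
  destruct (Rle_lt_dec (a i) (3/4)) as [Hai|Hai].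
  - assert (F1 (a i) <= F1 (3/4)) by (apply F1_mono; lra). lra.
  - destruct i as [|[|[|[|i]]]]; [lra | | lra | lra | lia].
    assert (F2 (1/2 + eps) <= F2 (a 1%nat)) by (apply F2_mono; lra). lra.
Qed.

Lemma piece0_starts_after_eps : eps <= a 0%nat.
Proof.
  apply Rnot_lt_le; intro Ha0.
  pose proof piece0_crosses_three_quarters.
  pose proof (uniform_piece_long 2 ltac:(lia)).
  destruct (proj1 division 2%nat ltac:(lia)) as [Ha2 [_ Hb2]].
  destruct (high_welfare_ordered 0 2 ltac:(lia) ltac:(lia) ltac:(lia)); lra.
Qed.

Lemma piece0_ends_after_last_eps : 1 - eps < b 0%nat.
Proof.
  apply Rnot_le_lt; intro Hb0.
  assert (F1 eps <= F1 (a 0%nat)) by (apply F1_mono; apply piece0_starts_after_eps).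
  assert (F1 (b 0%nat) <= F1 (1 - eps)) by (apply F1_mono; lra).
  pose proof (welfare_high 0%nat ltac:(lia)). unfold util, vals4 in *. lra.
Qed.

Lemma uniform_piece_before_piece0 i : (2 <= i < 4)%nat -> b i <= a 0%nat.
Proof.
  intros Hi.
  pose proof piece0_ends_after_last_eps.
  pose proof (uniform_piece_long i Hi).
  destruct (proj1 division i ltac:(lia)) as [_ [_ Hbi]].
  destruct (high_welfare_ordered 0 i ltac:(lia) ltac:(lia) ltac:(lia)); lra.
Qed.

(* Piece 1 then lies right of a uniform piece longer than 1/4, so player 1 misses
   its mass 1/2 + eps on [0, 1/4] and envies that piece. *)
Lemma uniform_piece_not_leftmost i : (2 <= i < 4)%nat -> a i = 0 -> False.
Proof.
  intros Hi Hai.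
  pose proof (uniform_piece_long i Hi).
  destruct (proj1 division 1%nat ltac:(lia)) as [Ha1 _].
  pose proof (high_welfare_nonempty 1 ltac:(lia)).
  assert (Hb : b i <= a 1%nat)
    by (destruct (high_welfare_ordered i 1 ltac:(lia) ltac:(lia) ltac:(lia)); lra).
  assert (F2 (1/4) <= F2 (b i)) by (apply F2_mono; lra).
  assert (F2 (1/4) <= F2 (a 1%nat)) by (apply F2_mono; lra).
  assert (F2 (b 1%nat) <= F2 1).
  { apply F2_mono. apply (proj1 division 1%nat ltac:(lia)). }
  pose proof (envy_freeness 1%nat i ltac:(lia) ltac:(lia)) as Henvy.
  unfold util, vals4 in Henvy. destruct i as [|[|i]]; [lia|lia|].
  rewrite Hai in Henvy. lra.
Qed.

(* Piece 1 must reach 1/4 - eps; the two uniform pieces then need more than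
   1/2 + 4 eps between it and piece 0, so piece 0 starts after 3/4 + 3 eps and
   player 0 envies piece 1. *)
Lemma piece1_not_leftmost : a 1%nat = 0 -> False.
Proof.
  intros Ha1.
  pose proof (welfare_high 1%nat ltac:(lia)) as Hw1.
  unfold util, vals4 in Hw1. rewrite Ha1 in Hw1.
  assert (Hb1 : 1/4 - eps <= b 1%nat).
  { apply Rnot_lt_le; intro Hb1.
    assert (F2 (b 1%nat) <= F2 (1/4 - eps)) by (apply F2_mono; lra). lra. }
  assert (Hafter : forall i, (2 <= i < 4)%nat -> b 1%nat <= a i).
  { intros i Hi. pose proof (high_welfare_nonempty i ltac:(lia)).
    destruct (proj1 division i ltac:(lia)) as [Hai _].
    destruct (high_welfare_ordered 1 i ltac:(lia) ltac:(lia) ltac:(lia)); lra. }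
  pose proof (Hafter 2%nat ltac:(lia)). pose proof (Hafter 3%nat ltac:(lia)).
  pose proof (uniform_piece_before_piece0 2 ltac:(lia)).
  pose proof (uniform_piece_before_piece0 3 ltac:(lia)).
  pose proof (uniform_piece_long 2 ltac:(lia)). pose proof (uniform_piece_long 3 ltac:(lia)).
  assert (Ha0 : 3/4 + 3*eps <= a 0%nat)
    by (destruct (high_welfare_ordered 2 3 ltac:(lia) ltac:(lia) ltac:(lia)); lra).
  assert (F1 (3/4 + 3*eps) <= F1 (a 0%nat)) by (apply F1_mono; lra).
  assert (F1 (b 0%nat) <= F1 1).
  { apply F1_mono. apply (proj1 division 0%nat ltac:(lia)). }
  assert (F1 eps <= F1 (b 1%nat)) by (apply F1_mono; lra).
  pose proof (envy_freeness 0%nat 1%nat ltac:(lia) ltac:(lia)) as Henvy.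
  unfold util, vals4 in Henvy. rewrite Ha1 in Henvy. lra.
Qed.

Lemma high_welfare_absurd : False.
Proof.
  destruct (complete_left_end 4 a b division completeness) as [i [Hi [_ Hai]]].
  destruct i as [|[|[|[|i]]]]; [| | | | lia].
  - pose proof piece0_starts_after_eps. lra.
  - exact (piece1_not_leftmost Hai).
  - exact (uniform_piece_not_leftmost 2 ltac:(lia) Hai).
  - exact (uniform_piece_not_leftmost 3 ltac:(lia) Hai).
Qed.

End HighWelfare.

Lemma complete_envy_free_eg_le a b : is_division 4 a b -> complete 4 a b ->
  envy_free 4 V a b -> eg 4 V a b <= 1/4 + 2*eps.
Proof.
  intros Hd Hc Hef. apply Rnot_lt_le; intro Hlt.
  apply (high_welfare_absurd a b Hd Hc Hef).
  intros i Hi. pose proof (eg_le_util 4 V a b i Hi). lra.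
Qed.

Lemma partial_division_is_division : is_division 4 (ya eps) (yb eps).
Proof.
  split.
  - intros i Hi. destruct i as [|[|[|[|i]]]]; try lia; unfold ya, yb; lra.
  - intros i j Hi Hj Hij.
    destruct i as [|[|[|[|i]]]]; destruct j as [|[|[|[|j]]]]; try lia; unfold ya, yb;
      first [right; right; left; lra | right; right; right; lra].
Qed.

Lemma partial_division_incomplete : ~ complete 4 (ya eps) (yb eps).
Proof.
  intro Hc. destruct (Hc 1 ltac:(lra)) as [i [Hi [_ Hx]]].
  destruct i as [|[|[|[|i]]]]; try lia; unfold ya, yb in Hx; lra.
Qed.

Lemma partial_division_envy_free : envy_free 4 V (ya eps) (yb eps).
Proof.
  assert (F1 eps <= F1 (2*eps)) by (apply F1_mono; lra).
  assert (F1 (2*eps) <= F1 (3/4)) by (apply F1_mono; lra).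
  assert (F1 eps <= F1 (1/2)) by (apply F1_mono; lra).
  assert (F1 (1/2) <= F1 (3/4)) by (apply F1_mono; lra).
  assert (F1 eps <= F1 (1/2 + eps)) by (apply F1_mono; lra).
  assert (F1 (1/2 + eps) <= F1 (3/4)) by (apply F1_mono; lra).
  assert (F2 (1/2 + eps) <= F2 (1 - eps)) by (apply F2_mono; lra).
  assert (F2 (1 - eps) <= F2 1) by (apply F2_mono; lra).
  intros i j Hi Hj.
  destruct i as [|[|[|[|i]]]]; destruct j as [|[|[|[|j]]]]; try lia;
    unfold util, vals4, unif, ya, yb; lra.
Qed.

Lemma partial_division_utils i : (i < 4)%nat ->
  util V (ya eps) (yb eps) i i >= 1/2 - 2*eps.
Proof.
  assert (F1 eps <= F1 (2*eps)) by (apply F1_mono; lra).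
  intros Hi. destruct i as [|[|[|[|i]]]]; try lia; unfold util, vals4, unif, ya, yb; lra.
Qed.

Lemma partial_division_eg : 1/2 - 2*eps <= eg 4 V (ya eps) (yb eps).
Proof.
  apply eg_glb; [lia|]. intros i Hi. apply Rge_le, partial_division_utils, Hi.
Qed.

Lemma dumping_paradox : eg_dumping_paradox 4 V ((2 - 8*eps) / (1 + 8*eps)).
Proof.
  set (alpha := (2 - 8*eps) / (1 + 8*eps)).
  assert (Hprod : alpha * (1/4 + 2*eps) = 1/2 - 2*eps) by (unfold alpha; field; lra).
  split.
  - unfold alpha. apply Rmult_lt_reg_r with (1 + 8*eps); [lra|].
    unfold Rdiv. rewrite Rmult_assoc, Rinv_l by lra. lra.
  - exists (ya eps), (yb eps).
    split; [apply partial_division_is_division|].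
    split; [apply partial_division_incomplete|].
    split; [apply partial_division_envy_free|].
    intros a' b' Hd Hc Hef.
    pose proof (complete_envy_free_eg_le a' b' Hd Hc Hef).
    pose proof partial_division_eg.
    assert (0 < alpha) by (unfold alpha, Rdiv; apply Rmult_lt_0_compat;
                           [lra | apply Rinv_0_lt_compat; lra]).
    assert (alpha * eg 4 V a' b' <= alpha * (1/4 + 2*eps))
      by (apply Rmult_le_compat_l; lra).
    lra.
Qed.

End Instance.

Theorem mainTheorem10 :
  exists eps0, 0 < eps0 /\
  forall eps, 0 < eps < eps0 ->
  forall F1 F2 : R -> R,
    valuation F1 -> valuation F2 ->
    F1 eps - F1 0 = 1/2 - eps ->
    F1 (3/4 + 3*eps) - F1 (3/4) = 3*eps ->
    F1 1 - F1 (1 - eps) = 1/2 - 2*eps ->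
    F2 (2*eps) - F2 eps = 3*eps ->
    F2 (1/4) - F2 (1/4 - eps) = 1/2 - 2*eps ->
    F2 (1/2 + eps) - F2 (1/2) = 1/2 - eps ->
    (forall a b, is_division 4 a b -> complete 4 a b ->
       envy_free 4 (vals4 F1 F2) a b -> eg 4 (vals4 F1 F2) a b <= 1/4 + 2*eps) /\
    (is_division 4 (ya eps) (yb eps) /\ ~ complete 4 (ya eps) (yb eps) /\
     envy_free 4 (vals4 F1 F2) (ya eps) (yb eps) /\
     (forall i, (i < 4)%nat ->
        util (vals4 F1 F2) (ya eps) (yb eps) i i >= 1/2 - 2*eps)) /\
    eg_dumping_paradox 4 (vals4 F1 F2) ((2 - 8*eps) / (1 + 8*eps)).
Proof.
  exists (1/16). split; [lra|].
  intros eps He F1 F2 HF1 HF2 h1 h2 h3 h4 h5 h6.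
  destruct (player1_profile eps F1 ltac:(lra) HF1 h1 h2 h3) as [A1 [A2 [A3 A4]]].
  destruct (player2_profile eps F2 ltac:(lra) HF2 h4 h5 h6)
    as [B1 [B2 [B3 [B4 B5]]]].
  destruct HF1 as [M1 [_ [A0 A5]]]. destruct HF2 as [M2 [_ [B0 B7]]].
  split; [|split; [split; [|split; [|split]]|]].
  - apply (complete_envy_free_eg_le eps F1 F2); assumption.
  - exact (partial_division_is_division eps He).
  - exact (partial_division_incomplete eps He).
  - apply (partial_division_envy_free eps F1 F2); assumption.
  - apply (partial_division_utils eps F1 F2); assumption.
  - apply (dumping_paradox eps F1 F2); assumption.
Qed.
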